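(* Let $\mathcal{P}(3^3)$ be the graph whose vertices are the partitions of $\{1,\ldots,9\}$ into three cells each of size three, two such partitions being adjacent if and only if each cell of one partition contains exactly one point from each cell of the other. Let $S$ be an independent set of size $70$ in $\mathcal{P}(3^3)$. If $\pi\in S$, then there are $36$ partitions $\sigma\in S$ such that the meet $\pi\wedge\sigma$ has $7$ cells, a further $18$ such that $\pi\wedge\sigma$ has $6$ cells, and $15$ such that $\pi\wedge\sigma$ has $5$ cells.
   Context: The meet $\pi\wedge\sigma$ of two partitions is the partition whose cells are the nonempty intersections of a cell of $\pi$ with a cell of $\sigma$. *)

(* Ground set {1,...,9} is represented by 'I_9 = {0,...,8}. *)
From mathcomp Require Import all_boot.
Set Implicit Arguments. Unset Strict Implicit. Unset Printing Implicit Defensive.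

Definition is_part333 (P : {set {set 'I_9}}) : bool :=
  [&& partition P [set: 'I_9], #|P| == 3 & [forall A in P, #|A| == 3]].

Definition p333_adj (P Q : {set {set 'I_9}}) : bool :=
  [forall A in P, forall B in Q, #|A :&: B| == 1].

Definition meet_part (P Q : {set {set 'I_9}}) : {set {set 'I_9}} :=
  [set A :&: B | A in P, B in Q] :\ set0.

Definition p333_independent (S : {set {set {set 'I_9}}}) : Prop :=
  (forall P, P \in S -> is_part333 P) /\
  (forall P Q, P \in S -> Q \in S -> ~~ p333_adj P Q).

From mathcomp Require Import all_boot zify.
Set Implicit Arguments. Unset Strict Implicit. Unset Printing Implicit Defensive.

(* Every partition
   lies in exactly 12 of the 840 four-cliques of P(3^3) (the parallel-class
   systems of the affine planes on the nine points), so an independent set S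
   of size 70 = 840 / 12 meets every such "plane" exactly once.  For pi in S,
   classify the planes by the multiset of the meet sizes |pi /\ sigma| of their
   members: the number of planes of a given class through sigma depends only
   on |pi /\ sigma|.  Counting the planes of each class through their point in
   S gives four linear equations in the numbers of sigma in S with
   |pi /\ sigma| = 3, 5, 6, 7, 9, whose only solution with pi in S is
   1, 15, 18, 36, 0.  These incidences are computed for one standard pi; a
   permutation of the points reduces the general case to it. *)

Lemma count_pairwise_le1 (T : Type) (e : rel T) (s : pred T) (L : seq T) :
  (forall x y, s x -> s y -> ~~ e x y) -> pairwise e L -> count s L <= 1.
Proof.
move=> indep; elim: L => //= x L IHL /andP [e_x /IHL le1].
case sx: (s x) => //=; rewrite add1n ltnS leqn0 eqn0Ngt -has_count -all_predC.
by apply: sub_all e_x => y; apply: contraL => sy; apply: indep.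
Qed.

Lemma map_uniq_inj_in (T U : eqType) (f : T -> U) (s : seq T) :
  uniq (map f s) -> {in s &, injective f}.
Proof.
elim: s => //= x s IHs /andP [fx_s fs_uniq] y z; rewrite !inE.
case/predU1P => [-> | y_s] /predU1P [-> | z_s] // fyz.
- by rewrite fyz map_f in fx_s.
- by rewrite -fyz map_f in fx_s.
- exact: IHs.
Qed.

Lemma sum_by_value (T U : eqType) (vs : seq T) (s : pred T) (g : T -> U)
    (us : seq U) (F : U -> nat) :
    uniq us -> (forall v, v \in vs -> s v -> g v \in us) ->
  \sum_(v <- vs | s v) F (g v) =
  \sum_(u <- us) F u * count (fun v => s v && (g v == u)) vs.
Proof.
move=> us_uniq g_us; elim: vs g_us => [|v vs IH] g_us.
  by rewrite big_nil big1_seq // => u _; rewrite muln0.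
rewrite big_cons /= IH; last by move=> x x_vs; apply: g_us; rewrite inE x_vs orbT.
rewrite (eq_bigr _ (fun u _ => mulnDr _ _ _)) big_split /=.
case: ifP => [sv | _]; last by rewrite [X in _ = X + _]big1 // => u _; rewrite muln0.
congr (_ + _); rewrite (eq_bigr (fun u => if u == g v then F u else 0)); last first.
  by move=> u _; rewrite eq_sym; case: eqP; rewrite ?muln0 ?muln1.
by rewrite -big_mkcond -big_filter filter_pred1_uniq ?big_seq1 ?g_us ?inE ?eqxx.
Qed.

Lemma card_count_enum (T : finType) (A : {pred T}) : #|A| = count (mem A) (enum T).
Proof.
by rewrite cardE /enum_mem size_filter count_filter; apply: eq_count => x; rewrite /= andbT.
Qed.

Lemma map_nth_enum_ord (T : Type) (x0 : T) (n : nat) (l : seq T) :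
  size l = n -> [seq nth x0 l i | i : 'I_n <- enum 'I_n] = l.
Proof. by move=> <-; rewrite -[RHS](mkseq_nth x0) /mkseq -val_enum_ord -map_comp. Qed.

Lemma card_imset_kernel (aT rT : finType) (V : eqType) (f : aT -> rT) (g : aT -> V) :
    (forall x y, (f x == f y) = (g x == g y)) ->
  #|[set f x | x : aT]| = size (undup [seq g x | x <- enum aT]).
Proof.
move=> fg; have -> : #|[set f x | x : aT]| = size (undup [seq f x | x <- enum aT]).
  rewrite -(card_uniqP (undup_uniq _)); apply: eq_card => y.
  by rewrite mem_undup; apply/imsetP/mapP => [] [x _ ->]; exists x; rewrite ?mem_enum.
elim: (enum aT) => //= x s IHs.
have -> : (f x \in [seq f y | y <- s]) = (g x \in [seq g y | y <- s]).
  by apply/mapP/mapP => -[y y_s /eqP E]; exists y => //; apply/eqP; [rewrite -fg | rewrite fg].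
by case: (g x \in _); rewrite /= IHs.
Qed.

Section PlaneCounting.
Variables (T : eqType) (vs : seq T) (planes : seq (seq T)).
Hypothesis vs_uniq : uniq vs.
Hypothesis planes_in_vs : forall L, L \in planes -> uniq L /\ {subset L <= vs}.

Lemma sum_planes_count (s : pred T) (w : seq T -> nat) :
  \sum_(L <- planes) w L * count s L =
  \sum_(v <- vs | s v) \sum_(L <- planes | v \in L) w L.
Proof.
rewrite (exchange_big_dep predT) //=; apply: eq_big_seq => L /planes_in_vs [L_uniq L_vs].
rewrite big_const_seq iter_addn_0.
have /permP <- : perm_eq (filter (mem L) vs) L.
  apply: uniq_perm; rewrite ?filter_uniq // => v.
  by rewrite mem_filter andb_idr //; apply: L_vs.
by rewrite count_filter.
Qed.

Lemma planes_meet_once (s : pred T) (r : nat) :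
    (forall v, v \in vs -> count (fun L => v \in L) planes = r) ->
    (forall L, L \in planes -> count s L <= 1) ->
    count s vs * r = size planes ->
  forall L, L \in planes -> count s L = 1.
Proof.
move=> through le1 total.
have sum_count : \sum_(L <- planes) count s L = size planes.
  have := sum_planes_count s (fun=> 1); rewrite (eq_bigr _ (fun L _ => mul1n _)) => ->.
  rewrite -total mulnC -iter_addn_0 -big_const_seq.
  rewrite big_seq_cond [RHS]big_seq_cond; apply: eq_bigr => v /andP [v_vs _].
  by rewrite sum1_count through.
have : \sum_(L <- planes) (1 - count s L) + size planes = 0 + size planes.
  rewrite -{1}sum_count -big_split -sum1_size /=.
  by apply: eq_big_seq => L /le1; apply: subnK.
move/addIn/eqP; rewrite sum_nat_seq_eq0 => /allP sum0 L L_planes.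
by apply/eqP; rewrite eqn_leq le1 //= -subn_eq0 (implyP (sum0 L L_planes)).
Qed.

End PlaneCounting.

Definition cell_of (l : seq nat) (i : 'I_9) : {set 'I_9} :=
  [set j : 'I_9 | nth 0 l j == nth 0 l i].

Definition part_of (l : seq nat) : {set {set 'I_9}} := [set cell_of l i | i : 'I_9].

Lemma zip_enum_ord (l m : seq nat) : size l = 9 -> size m = 9 ->
  [seq (nth 0 l i, nth 0 m i) | i : 'I_9 <- enum 'I_9] = zip l m.
Proof.
move=> sl sm; have sz : size (zip l m) = 9 by rewrite size_zip sl sm.
by rewrite -[RHS](map_nth_enum_ord (0, 0) sz); apply: eq_map => i; rewrite nth_zip ?sl.
Qed.

Lemma meet_part_of (l m : seq nat) :
  meet_part (part_of l) (part_of m) = [set cell_of l i :&: cell_of m i | i : 'I_9].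
Proof.
apply/setP => Z; rewrite !inE; apply/andP/imsetP => [[/set0Pn [k] Zk] | [k _ ->]].
- case/imset2P => _ _ /imsetP [i _ ->] /imsetP [j _ ->] Z_ij; move: Zk.
  rewrite Z_ij !inE => /andP [/eqP ki /eqP kj]; exists k => //.
  by apply/setP => x; rewrite !inE ki kj.
- split; first by apply/set0Pn; exists k; rewrite !inE !eqxx.
  by apply/imset2P; exists (cell_of l k) (cell_of m k); rewrite ?imset_f.
Qed.

Lemma card_meet_part_of (l m : seq nat) : size l = 9 -> size m = 9 ->
  #|meet_part (part_of l) (part_of m)| = size (undup (zip l m)).
Proof.
move=> sl sm; rewrite meet_part_of -zip_enum_ord //.
apply: card_imset_kernel => i j; apply/eqP/eqP => [cells_ij | [li lj]].
- have : j \in cell_of l j :&: cell_of m j by rewrite !inE !eqxx.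
  by rewrite -cells_ij !inE => /andP [/eqP -> /eqP ->].
- by apply/setP => k; rewrite !inE li lj.
Qed.

Lemma p333_adj_part_of (l m : seq nat) : size l = 9 -> size m = 9 ->
    all (fun x => x < 3) l -> all (fun x => x < 3) m -> uniq (zip l m) ->
  p333_adj (part_of l) (part_of m).
Proof.
move=> sl sm /allP l3 /allP m3 zip_uniq.
pose pairs := [seq (x, y) | x <- iota 0 3, y <- iota 0 3].
have pairsP x y : x < 3 -> y < 3 -> (x, y) \in pairs.
  by move=> x3 y3; apply/allpairsP; exists (x, y); rewrite !mem_iota.
have [_ zip_pairs] : (size (zip l m) = size pairs) * (zip l m =i pairs).
  apply: uniq_min_size => [// | p |]; last by rewrite size_zip sl sm.
  rewrite -zip_enum_ord // => /mapP [k _ ->].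
  by apply: pairsP; [apply: l3 | apply: m3]; rewrite mem_nth ?sl ?sm.
apply/forall_inP => _ /imsetP [i _ ->]; apply/forall_inP => _ /imsetP [j _ ->].
have -> : #|cell_of l i :&: cell_of m j| = count_mem (nth 0 l i, nth 0 m j) (zip l m).
  rewrite card_count_enum -zip_enum_ord // [RHS]count_map.
  by apply: eq_count => k; rewrite !inE.
rewrite count_uniq_mem // zip_pairs pairsP //; [apply: l3 | apply: m3].
  by rewrite mem_nth ?sl.
by rewrite mem_nth ?sm.
Qed.

Lemma cell_of_part_of (l m : seq nat) : part_of l = part_of m -> cell_of l =1 cell_of m.
Proof.
move=> lm i; have /imsetP [j _ lm_i] : cell_of l i \in part_of m by rewrite -lm imset_f.
have : i \in cell_of m j by rewrite -lm_i inE.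
by rewrite lm_i inE => /eqP mij; apply/setP => k; rewrite !inE mij.
Qed.

Definition kernel (l : seq nat) : seq bool :=
  [seq nth 0 l i == nth 0 l j | i <- iota 0 9, j <- iota 0 9].

Lemma kernel_part_of (l m : seq nat) : part_of l = part_of m -> kernel l = kernel m.
Proof.
move=> lm; apply/eq_in_allpairs => i j; rewrite !mem_iota => /andP [_ i9] /andP [_ j9].
by have /setP /(_ (Ordinal i9)) := cell_of_part_of lm (Ordinal j9); rewrite !inE.
Qed.

Definition std : seq nat := [:: 0; 0; 0; 1; 1; 1; 2; 2; 2].

Lemma perm_eq_std (l : seq nat) :
  (forall x, count_mem x l = if x < 3 then 3 else 0) -> perm_eq l std.
Proof. by move=> count_l; apply/allP => x _; rewrite /= count_l; case: x => [|[|[|x]]]. Qed.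

Lemma part333_perm_std (P : {set {set 'I_9}}) :
  is_part333 P -> exists2 l, perm_eq l std & P = part_of l.
Proof.
case/and3P => /and3P [/eqP cover_P triv_P set0_P] /eqP card_P /forall_inP cells3.
pose l := [seq index (pblock P i) (enum P) | i <- enum 'I_9].
have nth_l (i : 'I_9) : nth 0 l i = index (pblock P i) (enum P).
  by rewrite (nth_map i) ?nth_ord_enum // size_enum_ord.
have pblock_P (i : 'I_9) : pblock P i \in P by rewrite pblock_mem // cover_P.
have cell_l i : cell_of l i = pblock P i.
  apply/setP => j; rewrite inE !nth_l (inj_in_eq (@index_inj _ set0 _)) ?mem_enum //.
  by rewrite eq_sym eq_pblock // cover_P.
exists l; last first.
  apply/setP => B; apply/idP/imsetP => [B_P | [i _ ->]]; last by rewrite cell_l.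
  have /set0Pn [i iB] : B != set0 by apply: contraNneq set0_P => <-.
  by exists i => //; rewrite cell_l (def_pblock triv_P B_P iB).
apply: perm_eq_std => x; rewrite count_map.
have size_P : size (enum P) = 3 by rewrite -cardE.
case: ltnP => [x3 | x3].
- have B_P : nth set0 (enum P) x \in P by rewrite -mem_enum mem_nth ?size_P.
  rewrite -[RHS](eqP (cells3 _ B_P)) card_count_enum; apply: eq_count => i /=.
  apply/eqP/idP => [<- | iB]; first by rewrite nth_index ?mem_enum // mem_pblock cover_P inE.
  by rewrite (def_pblock triv_P B_P iB) index_uniq ?enum_uniq ?size_P.
- apply/eqP; rewrite eqn0Ngt -has_count; apply/hasPn => i _ /=.
  have := index_mem (pblock P i) (enum P); rewrite mem_enum pblock_P size_P => lt3.
  by rewrite neq_ltn (leq_trans lt3 x3).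
Qed.

Section Relabelling.
Variable f : 'I_9 -> 'I_9.
Hypothesis f_inj : injective f.

Definition image_part (P : {set {set 'I_9}}) : {set {set 'I_9}} :=
  [set f @: (A : {set 'I_9}) | A in P].

Lemma image_part_inj : injective image_part.
Proof. exact/imset_inj/imset_inj. Qed.

Lemma imset_setT_inj : f @: [set: 'I_9] = [set: 'I_9].
Proof. by apply/eqP; rewrite eqEcard subsetT card_imset ?leqnn. Qed.

Lemma is_part333_image (P : {set {set 'I_9}}) : is_part333 (image_part P) = is_part333 P.
Proof.
rewrite /is_part333 -{1}imset_setT_inj imset_partition // card_imset; last exact: imset_inj.
congr [&& _, _ & _].
apply/forall_inP/forall_inP => [cells3 A A_P | cells3 _ /imsetP [A A_P ->]].
  by have := cells3 _ (imset_f _ A_P); rewrite card_imset.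
by rewrite card_imset //; apply: cells3.
Qed.

Lemma p333_adj_image (P Q : {set {set 'I_9}}) :
  p333_adj (image_part P) (image_part Q) = p333_adj P Q.
Proof.
have cardI (A B : {set 'I_9}) : #|f @: A :&: f @: B| = #|A :&: B|.
  by rewrite -imsetI ?card_imset // => x y _ _; apply: f_inj.
apply/forall_inP/forall_inP => [adj A A_P | adj _ /imsetP [A A_P ->]].
  apply/forall_inP => B B_Q; have /forall_inP := adj _ (imset_f _ A_P).
  by move/(_ _ (imset_f _ B_Q)); rewrite cardI.
by apply/forall_inP => _ /imsetP [B B_Q ->]; rewrite cardI; apply: (forall_inP (adj A A_P)).
Qed.

Lemma meet_part_image (P Q : {set {set 'I_9}}) :
  meet_part (image_part P) (image_part Q) = image_part (meet_part P Q).
Proof.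
have imsetI_f (A B : {set 'I_9}) : f @: (A :&: B) = f @: A :&: f @: B.
  by rewrite imsetI // => x y _ _; apply: f_inj.
apply/setP => Z; rewrite /meet_part /image_part !inE.
apply/andP/imsetP => [[Z0 /imset2P [_ _ /imsetP [A A_P ->] /imsetP [B B_Q ->] Z_AB]] | [W]].
  exists (A :&: B); last by rewrite Z_AB imsetI_f.
  rewrite !inE imset2_f // andbT; apply: contraNneq Z0 => AB0.
  by rewrite Z_AB -imsetI_f AB0 imset0.
rewrite !inE => /andP [W0 /imset2P [A B A_P B_Q W_AB]] ->.
by rewrite imset_eq0 W0 W_AB imsetI_f imset2_f ?imset_f.
Qed.

Lemma image_part_of (l m : seq nat) :
  (forall i, nth 0 m (f i) = nth 0 l i) -> image_part (part_of l) = part_of m.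
Proof.
move=> lm; have cell_image i : f @: cell_of l i = cell_of m (f i).
  by apply/setP => k; rewrite -[k](f_invF f_inj) mem_imset // !inE !lm.
apply/setP => Z; apply/imsetP/imsetP => [[_ /imsetP [i _ ->] ->] | [j _ ->]].
  by exists (f i); rewrite ?cell_image.
exists (cell_of l (invF f_inj j)); first exact: imset_f.
by rewrite cell_image f_invF.
Qed.

End Relabelling.

Lemma image_part_std (l : seq nat) :
  perm_eq l std -> exists2 f, injective f & image_part f (part_of l) = part_of std.
Proof.
move=> l_std; have sl : size l = 9 by rewrite (perm_size l_std).
have /(perm_iotaP 0) [Is Is_iota std_Is] : perm_eq std l by rewrite perm_sym.
rewrite sl in Is_iota; have size_Is : size Is = 9 by rewrite (perm_size Is_iota) size_iota.
have Is9 k : k < 9 -> nth 0 Is k < 9.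
  move=> k9; have : nth 0 Is k \in iota 0 9 by rewrite -(perm_mem Is_iota) mem_nth ?size_Is.
  by rewrite mem_iota.
pose h (k : 'I_9) : 'I_9 := inord (nth 0 Is k).
have h_inj : injective h.
  move=> i j /(congr1 val); rewrite /= !inordK ?Is9 // => /eqP.
  by rewrite nth_uniq ?size_Is ?(perm_uniq Is_iota) ?iota_uniq // => /eqP /val_inj.
have l_h k : nth 0 l (h k) = nth 0 std k.
  by rewrite inordK ?Is9 // std_Is (nth_map 0) ?size_Is.
have hV_inj := can_inj (f_invF h_inj).
exists (invF h_inj) => //; apply: (image_part_of hV_inj) => i.
by rewrite -[in RHS](f_invF h_inj i) l_h.
Qed.

Lemma p333_independent_image (f : 'I_9 -> 'I_9) (S : {set {set {set 'I_9}}}) :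
  injective f -> p333_independent S -> p333_independent (image_part f @: S).
Proof.
move=> f_inj [S333 S_indep].
split=> [_ /imsetP [P P_S ->] | _ _ /imsetP [P P_S ->] /imsetP [Q Q_S ->]].
  by rewrite is_part333_image //; apply: S333.
by rewrite p333_adj_image //; apply: S_indep.
Qed.

Lemma card_meet_image (f : 'I_9 -> 'I_9) (S : {set {set {set 'I_9}}})
    (P : {set {set 'I_9}}) (k : nat) :
    injective f ->
  #|[set Q in image_part f @: S | #|meet_part (image_part f P) Q| == k]| =
  #|[set Q in S | #|meet_part P Q| == k]|.
Proof.
move=> f_inj; have card_image R : #|image_part f R| = #|R| := card_imset _ (imset_inj f_inj).
rewrite -[RHS](card_imset _ (image_part_inj f_inj)); apply: eq_card => Z.
rewrite inE; apply/andP/imsetP => [[/imsetP [Q Q_S ->]] | [Q] ].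
  by rewrite meet_part_image // card_image => meetQ; exists Q; rewrite ?inE ?Q_S.
rewrite inE => /andP [Q_S meetQ] ->; split; first exact: imset_f.
by rewrite meet_part_image // card_image.
Qed.

Definition canon (l : seq nat) : seq nat := [seq index x (undup l) | x <- l].

(* The enumerations are locked, so that unification never tries to compute
   them; the computed facts unlock them for vm_compute. *)
Definition parts_enum : seq (seq nat) := undup [seq canon l | l <- permutations std].
Fact parts_key : unit. Proof. by []. Qed.
Definition parts : seq (seq nat) := locked_with parts_key parts_enum.
Canonical parts_unlockable := [unlockable of parts].

Lemma parts_uniq : uniq parts.
Proof. by rewrite unlock undup_uniq. Qed.

Lemma parts_perm_eq_std : all (perm_eq^~ std) parts.
Proof. by rewrite !unlock; vm_compute. Qed.

Lemma parts_kernel_uniq : uniq (map kernel parts).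
Proof. by rewrite !unlock; vm_compute. Qed.

Lemma part_of_canon (l : seq nat) : size l = 9 -> part_of (canon l) = part_of l.
Proof.
move=> sl; apply: eq_imset => i; apply/setP => j; rewrite !inE !(nth_map 0) ?sl //.
by rewrite (inj_in_eq (@index_inj _ 0 _)) // mem_undup mem_nth ?sl.
Qed.

Lemma part333_parts (P : {set {set 'I_9}}) :
  is_part333 P -> exists2 l, l \in parts & P = part_of l.
Proof.
case/part333_perm_std => l l_std ->; exists (canon l).
  by rewrite unlock mem_undup; apply: map_f; rewrite mem_permutations.
by rewrite part_of_canon // (perm_size l_std).
Qed.

Lemma part_of_inj : {in parts &, injective part_of}.
Proof.
by move=> l m l_parts m_parts /kernel_part_of; apply: (map_uniq_inj_in parts_kernel_uniq).
Qed.

Lemma card_part333_set (S : {set {set {set 'I_9}}}) :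
  (forall P, P \in S -> is_part333 P) -> #|S| = count (fun l => part_of l \in S) parts.
Proof.
move=> S333; rewrite -size_filter -(size_map part_of).
have S_parts : S =i map part_of [seq l <- parts | part_of l \in S].
  move=> P; apply/idP/mapP => [P_S | [l] ]; last by rewrite mem_filter => /andP [l_S _] ->.
  have [l l_parts P_l] := part333_parts (S333 P P_S).
  by exists l; rewrite // mem_filter -P_l P_S.
rewrite (eq_card S_parts); apply/card_uniqP; rewrite map_inj_in_uniq => [|l m].
  exact: filter_uniq parts_uniq.
by rewrite !mem_filter => /andP [_ l_parts] /andP [_ m_parts]; apply: part_of_inj.
Qed.

Definition orthogonal (l m : seq nat) : bool := uniq (zip l m).

Lemma orthogonal_p333_adj :
  {in parts &, subrel orthogonal (fun l m => p333_adj (part_of l) (part_of m))}.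
Proof.
move=> l m /(allP parts_perm_eq_std) l_std /(allP parts_perm_eq_std) m_std.
by apply: p333_adj_part_of;
  rewrite ?(perm_size l_std) ?(perm_size m_std) ?(perm_all _ l_std) ?(perm_all _ m_std).
Qed.

Fixpoint cliques (T : Type) (e : rel T) (n : nat) (vs : seq T) {struct n} : seq (seq T) :=
  if n is n'.+1 then
    (fix extend vs := if vs is v :: vs' then
        [seq v :: c | c <- cliques e n' (filter (e v) vs')] ++ extend vs'
      else [::]) vs
  else [:: [::]].

Definition planes_enum : seq (seq (seq nat)) := cliques orthogonal 4 parts_enum.
Fact planes_key : unit. Proof. by []. Qed.
Definition planes : seq (seq (seq nat)) := locked_with planes_key planes_enum.
Canonical planes_unlockable := [unlockable of planes].

Lemma size_planes : size planes = 840.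
Proof. by rewrite !unlock; vm_compute. Qed.

Lemma planes_wf :
  all (fun L => [&& uniq L, all (mem parts) L & pairwise orthogonal L]) planes.
Proof. by rewrite !unlock; vm_compute. Qed.

Lemma parts_in_12_planes : all (fun l => count (fun L => l \in L) planes == 12) parts.
Proof. by rewrite !unlock; vm_compute. Qed.

Lemma planes_in_parts (L : seq (seq nat)) :
  L \in planes -> uniq L /\ {subset L <= parts}.
Proof. by move/(allP planes_wf) => /and3P [L_uniq /allP L_parts _]. Qed.

Lemma planes_meet_indep_once (S : {set {set {set 'I_9}}}) :
    p333_independent S -> #|S| = 70 ->
  forall L, L \in planes -> count (fun l => part_of l \in S) L = 1.
Proof.
case=> S333 S_indep S70.
apply: (planes_meet_once parts_uniq planes_in_parts (r := 12)).
- by move=> l /(allP parts_in_12_planes) /eqP.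
- move=> L /(allP planes_wf) /and3P [_ L_parts L_orth].
  apply: (count_pairwise_le1 (e := fun l m => p333_adj (part_of l) (part_of m))).
    by move=> l m; apply: S_indep.
  exact: sub_in_pairwise orthogonal_p333_adj _ L_parts L_orth.
- by rewrite -card_part333_set // S70 size_planes.
Qed.

Definition meet_type (l : seq nat) : nat := size (undup (zip std l)).
Definition plane_type (L : seq (seq nat)) : seq nat := sort leq (map meet_type L).

Definition meet_types : seq nat := [:: 3; 5; 6; 7; 9].
Definition plane_types : seq (seq nat) :=
  [:: [:: 3; 9; 9; 9]; [:: 5; 7; 7; 9]; [:: 6; 7; 7; 7]; [:: 6; 6; 6; 9]].

(* Rows are indexed by plane_types, columns by meet_types. *)
Definition incidence (c : seq nat) (t : nat) : nat :=
  nth 0 (nth [::] [:: [:: 12; 0; 0; 0; 1]; [:: 0; 12; 0; 4; 9];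
                      [:: 0; 0; 8; 8; 0]; [:: 0; 0; 4; 0; 2]] (index c plane_types))
    (index t meet_types).

Lemma planes_design :
  all (fun l => (meet_type l \in meet_types) &&
        all (fun c => count (fun L => plane_type L == c) [seq L <- planes | l \in L]
                      == incidence c (meet_type l)) plane_types) parts.
Proof. by rewrite !unlock; vm_compute. Qed.

Lemma plane_type_counts :
  [seq count (fun L => plane_type L == c) planes | c <- plane_types] = [:: 12; 324; 432; 72].
Proof. by rewrite !unlock; vm_compute. Qed.

Lemma count_plane_type (S : {set {set {set 'I_9}}}) (c : seq nat) :
    p333_independent S -> #|S| = 70 -> c \in plane_types ->
  count (fun L => plane_type L == c) planes =
  \sum_(t <- meet_types) incidence c t * #|[set P in S | #|meet_part (part_of std) P| == t]|.
Proof.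
move=> indS S70 c_types; have [S333 _] := indS; set s := fun l => part_of l \in S.
transitivity (\sum_(L <- planes) (plane_type L == c) * count s L).
  rewrite -sum1_count big_mkcond; apply: eq_big_seq => L /(planes_meet_indep_once indS S70) ->.
  by rewrite muln1; case: (_ == c).
rewrite (sum_planes_count parts_uniq planes_in_parts).
transitivity (\sum_(l <- parts | s l) incidence c (meet_type l)).
  rewrite big_seq_cond [RHS]big_seq_cond; apply: eq_bigr => l /andP [l_parts _].
  have /andP [_ /allP design_l] := allP planes_design l l_parts.
  rewrite -(eqP (design_l c c_types)) -sum1_count -big_filter [RHS]big_mkcond.
  by apply: eq_bigr => L _; case: (_ == c).
rewrite (sum_by_value _ (us := meet_types)) // => [|l /(allP planes_design) /andP [] //].
apply: eq_bigr => t _; rewrite card_part333_set => [|P]; last by rewrite inE => /andP [/S333].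
congr (_ * _); apply: eq_in_count => l /(allP parts_perm_eq_std) l_std.
by rewrite /s inE card_meet_part_of // (perm_size l_std).
Qed.

Lemma meet_counts_std (S : {set {set {set 'I_9}}}) :
    p333_independent S -> #|S| = 70 -> part_of std \in S ->
  [/\ #|[set P in S | #|meet_part (part_of std) P| == 7]| = 36,
      #|[set P in S | #|meet_part (part_of std) P| == 6]| = 18
    & #|[set P in S | #|meet_part (part_of std) P| == 5]| = 15].
Proof.
move=> indS S70 std_S.
have : 0 < #|[set P in S | #|meet_part (part_of std) P| == 3]|.
  by rewrite card_gt0; apply/set0Pn; exists (part_of std); rewrite inE std_S card_meet_part_of.
have := plane_type_counts; rewrite /= !(count_plane_type indS S70) //.
rewrite !big_cons !big_nil /incidence /= => -[] *.
(* With N t the number of P of meet size t: 12 = 12 N 3 + N 9 and N 3 > 0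
   force N 9 = 0, then 72 = 4 N 6, 432 = 8 (N 6 + N 7), 324 = 12 N 5 + 4 N 7. *)
by split; lia.
Qed.

Theorem corollary5p2 (S : {set {set {set 'I_9}}}) :
  p333_independent S -> #|S| = 70 ->
  forall pi, pi \in S ->
    [/\ #|[set sigma in S | #|meet_part pi sigma| == 7]| = 36,
        #|[set sigma in S | #|meet_part pi sigma| == 6]| = 18
      & #|[set sigma in S | #|meet_part pi sigma| == 5]| = 15].
Proof.
move=> indS S70 pi pi_S; have [l l_std pi_l] := part333_perm_std (indS.1 pi pi_S).
subst pi; have [f f_inj f_std] := image_part_std l_std.
rewrite -!(card_meet_image S (part_of l) _ f_inj) f_std; apply: meet_counts_std.
- exact: p333_independent_image.
- by rewrite (card_imset _ (image_part_inj f_inj)).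
- by rewrite -f_std; apply: imset_f.
Qed.
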